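(* Let $\mathcal Q=\{I_j\}_{j\in\mathbb Z}$ be a bounded geometry partition of $\mathbb R$ (identified with $\partial\mathbb H_r$ via $iy\mapsto y$) with constant $C$, normalized so that $I_0=(-1,1)$, and let $1<M<\infty$. Then there is a bounded geometry partition $\mathcal Q'=\{I'_j\}_{j\in\mathbb Z}$ of $\mathbb R$ such that: (1) $I'_0=I_0$; (2) $I'_{-j}=-I'_j$ for all $j$; (3) $|I'_j|$ is a non-increasing function of $|j|$; (4) every $|I'_j|$ is an integer power of $2$; (5) if $I'\in\mathcal Q'\setminus\{I_0\}$ intersects $I\in\mathcal Q$ then $|I'|<|I|/M$; (6) the bounded geometry constant of $\mathcal Q'$ is bounded above by a constant depending only on $M$ and $C$.
   Context: A partition of a line is a locally finite collection of disjoint open intervals whose closures cover the line. It has bounded geometry with constant $C$ if $|I|/|J|\le C$ for every pair of adjacent intervals (sharing an endpoint). *)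

From Stdlib Require Export Reals ZArith.
Open Scope R_scope.

(* A Z-indexed family of open intervals I_j = (l j, r j). *)

Definition is_partition (l r : Z -> R) : Prop :=
  (forall j, l j < r j) /\
  (forall j k, j <> k -> forall x, ~ (l j < x < r j /\ l k < x < r k)) /\
  (forall x, exists eps, 0 < eps /\
     exists N : nat, forall j,
       (exists y, l j < y < r j /\ x - eps < y < x + eps) ->
       (Z.abs j <= Z.of_nat N)%Z) /\
  (forall x, exists j, l j <= x <= r j).

Definition Z_ordered (l r : Z -> R) : Prop :=
  forall j, r j = l (j + 1)%Z.

Definition bounded_geometry (l r : Z -> R) (C : R) : Prop :=
  forall j k, (r j = l k \/ r k = l j) ->
    (r j - l j) / (r k - l k) <= C.

From Stdlib Require Import Reals ZArith Lra Lia Classical ClassicalEpsilon.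
Open Scope R_scope.

(* Let m(x) be the least length of an interval of Q meeting (-x, x). Build Q' outwards from
   I_0 = (-1, 1): the two pieces adjacent to the current ends -p, p get the length
   min(previous length, largest power of 2 below m(p)/(2MC)). By bounded geometry, every
   interval of Q within distance d of (-x, x), where C d < m(x), has length at least m(x)/C.
   This gives (5), and also m(p) <= C m(p + d), which bounds the ratio of consecutive piece
   lengths by 4MC^2. As m is bounded below on bounded sets, the pieces exhaust the line. *)

Definition log2_floor (y : R) : Z := (up (ln y / ln 2) - 1)%Z.

Lemma pow2_log2_floor (y : R) : 0 < y ->
  powerRZ 2 (log2_floor y) <= y < 2 * powerRZ 2 (log2_floor y).
Proof.
  intros Hy. pose proof ln_lt_2 as Hln2.
  set (t := ln y / ln 2).
  destruct (archimed t) as [Hup1 Hup2].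
  rewrite powerRZ_Rpower by lra. unfold Rpower, log2_floor. fold t.
  rewrite minus_IZR.
  assert (Hexp : exp (t * ln 2) = y).
  { replace (t * ln 2) with (ln y) by (unfold t; field; lra). apply exp_ln; lra. }
  split.
  - destruct (Req_dec (IZR (up t) - 1) t) as [->|Hne]; [lra|].
    left. rewrite <- Hexp. apply exp_increasing, Rmult_lt_compat_r; lra.
  - replace 2 with (exp (ln 2)) at 1 by (apply exp_ln; lra).
    rewrite <- exp_plus, <- Hexp. apply exp_increasing.
    replace (ln 2 + (IZR (up t) - 1) * ln 2) with (IZR (up t) * ln 2) by ring.
    apply Rmult_lt_compat_r; lra.
Qed.

Lemma crossing_index (b : Z -> R) (x : R) (n : nat) (i0 : Z) :
  b i0 < x -> x <= b (i0 + Z.of_nat n)%Z ->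
  exists i, (i0 <= i < i0 + Z.of_nat n)%Z /\ b i < x <= b (i + 1)%Z.
Proof.
  revert i0. induction n as [|n IH]; intros i0 Hlo Hhi.
  - rewrite Z.add_0_r in Hhi. lra.
  - destruct (Rlt_dec (b (i0 + 1)%Z) x) as [Hlt|Hge].
    + destruct (IH (i0 + 1)%Z Hlt) as [i [Hi Hx]].
      { replace (i0 + 1 + Z.of_nat n)%Z with (i0 + Z.of_nat (S n))%Z by lia. exact Hhi. }
      exists i. split; [lia | exact Hx].
    + exists i0. split; [lia | lra].
Qed.

Lemma bounded_argmin (f : Z -> R) (P : Z -> Prop) (a : Z) (n : nat) :
  (exists k, P k) -> (forall k, P k -> (a <= k <= a + Z.of_nat n)%Z) ->
  exists k, P k /\ forall j, P j -> f k <= f j.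
Proof.
  revert P. induction n as [|n IH]; intros P [k0 Hk0] Hrange.
  - exists k0. split; [exact Hk0|]. intros j Hj.
    assert (j = k0) as -> by (pose proof (Hrange j Hj); pose proof (Hrange k0 Hk0); lia).
    lra.
  - set (t := (a + Z.of_nat (S n))%Z).
    destruct (classic (exists k, P k /\ k <> t)) as [Hex|Hnone].
    + destruct (IH (fun k => P k /\ k <> t) Hex) as [k [[Hk Hkt] Hmin]].
      { intros k [Hk Hkt]. pose proof (Hrange k Hk). unfold t in Hkt. lia. }
      destruct (classic (P t /\ f t < f k)) as [[Ht Hlt]|Hnot].
      * exists t. split; [exact Ht|]. intros j Hj.
        destruct (Z.eq_dec j t) as [->|Hjt]; [lra|].
        pose proof (Hmin j (conj Hj Hjt)). lra.
      * exists k. split; [exact Hk|]. intros j Hj.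
        destruct (Z.eq_dec j t) as [->|Hjt]; [|exact (Hmin j (conj Hj Hjt))].
        apply Rnot_lt_le. intros Hlt. exact (Hnot (conj Hj Hlt)).
    + assert (Honly : forall k, P k -> k = t).
      { intros k Hk. apply NNPP. intros Hkt. exact (Hnone (ex_intro _ k (conj Hk Hkt))). }
      exists t. rewrite <- (Honly k0 Hk0). split; [exact Hk0|].
      intros j Hj. rewrite (Honly j Hj), (Honly k0 Hk0). lra.
Qed.

Section OrderedPartition.

Variables l r : Z -> R.
Hypothesis l_lt_r : forall j, l j < r j.
Hypothesis lr_ordered : Z_ordered l r.

Lemma l_increasing i j : (i < j)%Z -> l i < l j.
Proof.
  intros Hij.
  assert (Hsucc : forall n : nat, l i < l (i + Z.of_nat (S n))%Z).
  { induction n as [|n IH].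
    - rewrite <- lr_ordered. apply l_lt_r.
    - replace (i + Z.of_nat (S (S n)))%Z with (i + Z.of_nat (S n) + 1)%Z by lia.
      rewrite <- lr_ordered. pose proof (l_lt_r (i + Z.of_nat (S n))%Z). lra. }
  replace j with (i + Z.of_nat (S (Z.to_nat (j - i - 1))))%Z by lia. apply Hsucc.
Qed.

Lemma l_nondecreasing i j : (i <= j)%Z -> l i <= l j.
Proof.
  intros Hij. destruct (Z.eq_dec i j) as [->|Hne]; [lra|].
  left. apply l_increasing. lia.
Qed.

Lemma r_le_l i j : (i < j)%Z -> r i <= l j.
Proof. intros Hij. rewrite lr_ordered. apply l_nondecreasing. lia. Qed.

Lemma adjacent_succ j k : r j = l k -> k = (j + 1)%Z.
Proof.
  rewrite lr_ordered. intros Heq.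
  destruct (Z.lt_total k (j + 1)) as [Hlt|[Heq'|Hgt]]; [|exact Heq'|].
  - pose proof (l_increasing _ _ Hlt). lra.
  - pose proof (l_increasing _ _ Hgt). lra.
Qed.

Lemma bounded_geometry_le C : bounded_geometry l r C ->
  forall j k, (r j = l k \/ r k = l j) -> r j - l j <= C * (r k - l k).
Proof.
  intros HB j k Hadj. pose proof (HB j k Hadj) as Hratio. pose proof (l_lt_r k).
  replace (r j - l j) with ((r j - l j) / (r k - l k) * (r k - l k)) by (field; lra).
  apply Rmult_le_compat_r; lra.
Qed.

Lemma bounded_geometry_ge1 C : bounded_geometry l r C -> 1 <= C.
Proof.
  intros HB.
  pose proof (bounded_geometry_le C HB 0 1 (or_introl (lr_ordered 0%Z))).
  pose proof (bounded_geometry_le C HB 1 0 (or_intror (lr_ordered 0%Z))).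
  pose proof (l_lt_r 0%Z). pose proof (l_lt_r 1%Z). simpl in *. nra.
Qed.

Definition meets_window (x : R) (k : Z) : Prop := l k < x /\ -x < r k.

Definition window_min (x v : R) : Prop :=
  (exists k, meets_window x k /\ r k - l k = v) /\
  (forall k, meets_window x k -> v <= r k - l k).

Lemma window_min_exists x : (forall y, exists j, l j <= y <= r j) ->
  (exists k, meets_window x k) -> exists v, window_min x v.
Proof.
  intros Hcover Hne.
  destruct (Hcover (- x)) as [j1 Hj1]. destruct (Hcover x) as [j2 Hj2].
  assert (Hrange : forall k, meets_window x k -> (j1 <= k <= j1 + Z.of_nat (Z.to_nat (j2 - j1)))%Z).
  { intros k [Hk1 Hk2].
    destruct (Z_lt_le_dec k j1) as [Hlt|Hge1]; [pose proof (r_le_l _ _ Hlt); lra|].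
    destruct (Z_lt_le_dec j2 k) as [Hlt|Hle2]; [pose proof (r_le_l _ _ Hlt); lra|].
    lia. }
  destruct (bounded_argmin (fun k => r k - l k) _ _ _ Hne Hrange) as [k [Hk Hmin]].
  exists (r k - l k). split; [exists k; auto | exact Hmin].
Qed.

(* Intervals beyond the window but within [delta] of it are still comparable to the window
   minimum: the first one is adjacent to an interval meeting the window, and a second one would
   squeeze an interval of length [< delta] between them. *)
Lemma window_min_right C x delta mu : bounded_geometry l r C ->
  window_min x mu -> C * delta < mu ->
  forall k, x <= l k -> l k < x + delta -> mu <= C * (r k - l k).
Proof.
  intros HB [[k0 [[Hk0l Hk0r] _]] Hmin] Hdelta k Hxk Hkd.
  assert (Hk0k : (k0 < k)%Z).
  { destruct (Z_lt_le_dec k0 k) as [Hlt|Hge]; [exact Hlt|].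
    pose proof (l_nondecreasing _ _ Hge). lra. }
  destruct (crossing_index l x (Z.to_nat (k - k0)) k0) as [i [Hi [Hil Hir]]]; [exact Hk0l| |].
  { replace (k0 + Z.of_nat (Z.to_nat (k - k0)))%Z with k by lia. exact Hxk. }
  assert (Hmeets : meets_window x i).
  { split; [exact Hil|]. rewrite lr_ordered in *.
    pose proof (l_nondecreasing (k0 + 1) (i + 1) ltac:(lia)). lra. }
  pose proof (Hmin i Hmeets) as Hmu.
  pose proof (bounded_geometry_le C HB i (i + 1) (or_introl (lr_ordered i))) as Hbg.
  destruct (Z.eq_dec (i + 1) k) as [<-|Hne]; [lra|].
  pose proof (r_le_l (i + 1) k ltac:(lia)).
  pose proof (bounded_geometry_ge1 C HB).
  assert (C * (r (i + 1)%Z - l (i + 1)%Z) <= C * delta) by (apply Rmult_le_compat_l; lra).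
  lra.
Qed.

End OrderedPartition.

Definition mirror (f : Z -> R) (j : Z) : R := - f (- j)%Z.

Section WindowNeighbourhood.

Variables l r : Z -> R.
Hypothesis l_lt_r : forall j, l j < r j.
Hypothesis lr_ordered : Z_ordered l r.

Lemma mirror_l_lt_r j : mirror r j < mirror l j.
Proof. unfold mirror. pose proof (l_lt_r (- j)). lra. Qed.

Lemma mirror_ordered : Z_ordered (mirror r) (mirror l).
Proof.
  intros j. unfold mirror. rewrite lr_ordered. do 3 f_equal. lia.
Qed.

Lemma mirror_len j : mirror l j - mirror r j = r (- j)%Z - l (- j)%Z.
Proof. unfold mirror. ring. Qed.

Lemma mirror_bounded_geometry C :
  bounded_geometry l r C -> bounded_geometry (mirror r) (mirror l) C.
Proof.
  intros HB j k Hadj. rewrite !mirror_len. apply HB.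
  unfold mirror in Hadj. lra.
Qed.

Lemma mirror_window_min x v :
  window_min l r x v -> window_min (mirror r) (mirror l) x v.
Proof.
  unfold window_min, meets_window, mirror.
  intros [[k [Hk Hkv]] Hmin]. split.
  - exists (- k)%Z. rewrite Z.opp_involutive. split; lra.
  - intros j Hj. replace (- l (- j)%Z - - r (- j)%Z) with (r (- j)%Z - l (- j)%Z) by ring.
    apply Hmin. lra.
Qed.

Lemma window_min_left C x delta mu : bounded_geometry l r C ->
  window_min l r x mu -> C * delta < mu ->
  forall k, - (x + delta) < r k -> r k <= - x -> mu <= C * (r k - l k).
Proof.
  intros HB Hmu Hdelta k Hk1 Hk2.
  rewrite <- (Z.opp_involutive k), <- mirror_len.
  apply (window_min_right _ _ mirror_l_lt_r mirror_ordered C x delta);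
    [apply mirror_bounded_geometry | apply mirror_window_min | | |];
    unfold mirror; rewrite ?Z.opp_involutive; auto; lra.
Qed.

Lemma window_min_near C x delta mu : bounded_geometry l r C ->
  window_min l r x mu -> C * delta < mu ->
  forall k, l k < x + delta -> - (x + delta) < r k -> mu <= C * (r k - l k).
Proof.
  intros HB Hmu Hdelta k Hk1 Hk2.
  destruct (Rlt_dec (l k) x) as [Hkl|Hkl];
    [|apply (window_min_right _ _ l_lt_r lr_ordered C x delta); auto; lra].
  destruct (Rlt_dec (- x) (r k)) as [Hkr|Hkr];
    [|apply (window_min_left C x delta); auto; lra].
  pose proof (proj2 Hmu k (conj Hkl Hkr)).
  pose proof (bounded_geometry_ge1 _ _ l_lt_r lr_ordered C HB). pose proof (l_lt_r k). nra.
Qed.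

End WindowNeighbourhood.

Section Construction.

Variable g : R -> R.

(* [pieces n = (|I'_n|, right end of I'_n)] for [n >= 0]; [I'_{-n}] is the mirror image of [I'_n]. *)
Fixpoint pieces (n : nat) : R * R :=
  match n with
  | O => (2, 1)
  | S n => let (a, p) := pieces n in let a' := Rmin a (g p) in (a', p + a')
  end.

Definition piece_len (n : nat) : R := fst (pieces n).
Definition piece_end (n : nat) : R := snd (pieces n).

Lemma piece_len_0 : piece_len 0 = 2. Proof. reflexivity. Qed.
Lemma piece_end_0 : piece_end 0 = 1. Proof. reflexivity. Qed.

Lemma piece_len_S n : piece_len (S n) = Rmin (piece_len n) (g (piece_end n)).
Proof. unfold piece_len, piece_end. simpl. destruct (pieces n). reflexivity. Qed.

Lemma piece_end_S n : piece_end (S n) = piece_end n + piece_len (S n).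
Proof. unfold piece_len, piece_end. simpl. destruct (pieces n). reflexivity. Qed.

Lemma piece_len_antitone n n' : (n <= n')%nat -> piece_len n' <= piece_len n.
Proof.
  induction 1 as [|n' _ IH]; [lra|].
  rewrite piece_len_S. pose proof (Rmin_l (piece_len n') (g (piece_end n'))). lra.
Qed.

Lemma piece_len_pow2 : (forall p, exists e, g p = powerRZ 2 e) ->
  forall n, exists e, piece_len n = powerRZ 2 e.
Proof.
  intros Hg n. induction n as [|n IH].
  - exists 1%Z. rewrite piece_len_0. simpl. ring.
  - rewrite piece_len_S. apply Rmin_case; auto.
Qed.

Hypothesis g_pos : forall p, 0 < g p.

Lemma piece_len_pos n : 0 < piece_len n.
Proof.
  induction n as [|n IH]; [rewrite piece_len_0; lra|].
  rewrite piece_len_S. apply Rmin_case; auto.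
Qed.

Lemma piece_end_mono n n' : (n <= n')%nat -> piece_end n <= piece_end n'.
Proof.
  induction 1 as [|n' _ IH]; [lra|].
  rewrite piece_end_S. pose proof (piece_len_pos (S n')). lra.
Qed.

Lemma piece_end_ge1 n : 1 <= piece_end n.
Proof. rewrite <- piece_end_0. apply piece_end_mono. lia. Qed.

Lemma piece_end_unbounded :
  (forall B, exists c, 0 < c /\ forall p, 1 <= p <= B -> c <= g p) ->
  forall B, exists n, B < piece_end n.
Proof.
  intros Hglow B. apply NNPP. intros Hbounded.
  assert (HB : forall n, piece_end n <= B).
  { intros n. apply Rnot_lt_le. intros Hn. exact (Hbounded (ex_intro _ n Hn)). }
  destruct (Hglow B) as [c [Hc Hgc]].
  set (a := Rmin 2 c).
  assert (Ha : 0 < a) by (unfold a; apply Rmin_case; lra).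
  assert (Hlen : forall n, a <= piece_len n).
  { induction n as [|n IH]; [rewrite piece_len_0; apply Rmin_l|].
    rewrite piece_len_S. apply Rmin_glb; [exact IH|].
    pose proof (Rmin_r 2 c). pose proof (Hgc (piece_end n) (conj (piece_end_ge1 n) (HB n))).
    unfold a; lra. }
  assert (Hend : forall n, 1 + INR n * a <= piece_end n).
  { induction n as [|n IH]; [rewrite piece_end_0; simpl; lra|].
    rewrite piece_end_S, S_INR. pose proof (Hlen (S n)). lra. }
  destruct (INR_unbounded (B / a)) as [n Hn].
  pose proof (Hend n). pose proof (HB n).
  assert (B < INR n * a) by (apply (Rmult_lt_compat_r a) in Hn; [|exact Ha];
    replace (B / a * a) with B in Hn by (field; lra); lra).
  lra.
Qed.

Lemma piece_len_ratio K : (forall n, piece_len n <= K * piece_len (S n)) ->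
  forall u v, (v = S u \/ u = S v)%nat -> piece_len u / piece_len v <= K.
Proof.
  intros Hstep u v Huv. pose proof (piece_len_pos v) as Hv.
  apply (Rmult_le_reg_r (piece_len v)); [exact Hv|].
  replace (piece_len u / piece_len v * piece_len v) with (piece_len u) by (field; lra).
  destruct Huv as [Hvu|Huv]; subst; [apply Hstep|].
  pose proof (Hstep 0%nat). pose proof (piece_len_antitone 0 1 ltac:(lia)).
  pose proof (piece_len_pos 0). pose proof (piece_len_pos 1).
  pose proof (piece_len_antitone v (S v) ltac:(lia)).
  assert (1 <= K) by nra. nra.
Qed.

(* [breakpoint j] is the left end of [I'_j]. *)
Definition breakpoint (j : Z) : R :=
  if (0 <? j)%Z then piece_end (Z.to_nat (j - 1)) else - piece_end (Z.to_nat (- j)).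

Lemma breakpoint_pos n : breakpoint (Z.of_nat (S n)) = piece_end n.
Proof. unfold breakpoint. destruct (Z.ltb_spec 0 (Z.of_nat (S n))); [f_equal|]; lia. Qed.

Lemma breakpoint_nonpos n : breakpoint (- Z.of_nat n) = - piece_end n.
Proof. unfold breakpoint. destruct (Z.ltb_spec 0 (- Z.of_nat n)); [lia|]. do 2 f_equal. lia. Qed.

Lemma breakpoint_cases (j : Z) :
  (exists n, j = Z.of_nat (S n) /\ Z.abs_nat j = S n) \/
  (exists n, j = (- Z.of_nat n)%Z /\ Z.abs_nat j = n).
Proof.
  destruct (Z_lt_le_dec 0 j).
  - left. exists (Z.to_nat (j - 1)). lia.
  - right. exists (Z.to_nat (- j)). lia.
Qed.

Lemma breakpoint_len j : breakpoint (j + 1) - breakpoint j = piece_len (Z.abs_nat j).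
Proof.
  destruct (breakpoint_cases j) as [[n [-> ->]]|[n [-> ->]]]; [|destruct n as [|n]].
  - replace (Z.of_nat (S n) + 1)%Z with (Z.of_nat (S (S n))) by lia.
    rewrite !breakpoint_pos, piece_end_S. ring.
  - replace (- Z.of_nat 0 + 1)%Z with (Z.of_nat 1) by lia.
    rewrite breakpoint_pos, breakpoint_nonpos, piece_end_0, piece_len_0. ring.
  - replace (- Z.of_nat (S n) + 1)%Z with (- Z.of_nat n)%Z by lia.
    rewrite !breakpoint_nonpos, piece_end_S. ring.
Qed.

Lemma breakpoint_sym j : breakpoint (- j) = - breakpoint (j + 1).
Proof.
  unfold breakpoint.
  destruct (Z.ltb_spec 0 (- j)), (Z.ltb_spec 0 (j + 1)); try lia.
  - rewrite Ropp_involutive. do 2 f_equal. lia.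
  - do 3 f_equal. lia.
Qed.

Lemma breakpoint_lt j : breakpoint j < breakpoint (j + 1).
Proof. pose proof (breakpoint_len j). pose proof (piece_len_pos (Z.abs_nat j)). lra. Qed.

Lemma breakpoint_ordered : Z_ordered breakpoint (fun j => breakpoint (j + 1)).
Proof. intros j. reflexivity. Qed.

Lemma breakpoint_within j :
  - piece_end (Z.abs_nat j) <= breakpoint j /\ breakpoint (j + 1) <= piece_end (Z.abs_nat j).
Proof.
  destruct (breakpoint_cases j) as [[n [-> ->]]|[n [-> ->]]].
  - replace (Z.of_nat (S n) + 1)%Z with (Z.of_nat (S (S n))) by lia.
    rewrite !breakpoint_pos. pose proof (piece_end_ge1 n). pose proof (piece_end_ge1 (S n)). lra.
  - rewrite breakpoint_nonpos. split; [lra|].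
    destruct n as [|n].
    + replace (- Z.of_nat 0 + 1)%Z with (Z.of_nat 1) by lia. rewrite breakpoint_pos. lra.
    + replace (- Z.of_nat (S n) + 1)%Z with (- Z.of_nat n)%Z by lia.
      rewrite breakpoint_nonpos. pose proof (piece_end_ge1 n). pose proof (piece_end_ge1 (S n)). lra.
Qed.

Lemma breakpoint_partition : (forall B, exists n, B < piece_end n) ->
  is_partition breakpoint (fun j => breakpoint (j + 1)).
Proof.
  intros Hunb.
  pose proof (r_le_l _ _ breakpoint_lt breakpoint_ordered) as Hrl.
  pose proof (l_nondecreasing _ _ breakpoint_lt breakpoint_ordered) as Hle.
  split; [exact breakpoint_lt|]. split; [|split].
  - intros j k Hjk x [[Hj1 Hj2] [Hk1 Hk2]].
    destruct (Z_lt_le_dec j k) as [Hlt|Hge].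
    + pose proof (Hrl j k Hlt). lra.
    + pose proof (Hrl k j ltac:(lia)). lra.
  - intros x. destruct (Hunb (Rabs x + 1)) as [n Hn].
    pose proof (Rle_abs x). pose proof (Rle_abs (- x)). rewrite Rabs_Ropp in *.
    pose proof (piece_end_mono n (S n) ltac:(lia)).
    exists 1. split; [lra|]. exists (S (S n)). intros j [y [[Hy1 Hy2] [Hy3 Hy4]]].
    destruct (Z_le_gt_dec (Z.abs j) (Z.of_nat (S (S n)))) as [Hj|Hj]; [exact Hj|exfalso].
    destruct (Z_lt_le_dec 0 j).
    + pose proof (Hle (Z.of_nat (S (S n))) j ltac:(lia)). rewrite breakpoint_pos in *. lra.
    + pose proof (Hle (j + 1)%Z (- Z.of_nat (S n))%Z ltac:(lia)).
      rewrite breakpoint_nonpos in *. lra.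
  - intros x. destruct (Hunb (Rabs x)) as [n Hn].
    pose proof (Rle_abs x). pose proof (Rle_abs (- x)). rewrite Rabs_Ropp in *.
    destruct (crossing_index breakpoint x (n + S n) (- Z.of_nat n)) as [i [_ Hi]].
    + rewrite breakpoint_nonpos. lra.
    + replace (- Z.of_nat n + Z.of_nat (n + S n))%Z with (Z.of_nat (S n)) by lia.
      rewrite breakpoint_pos. lra.
    + exists i. lra.
Qed.

Lemma breakpoint_bounded_geometry K : (forall n, piece_len n <= K * piece_len (S n)) ->
  bounded_geometry breakpoint (fun j => breakpoint (j + 1)) K.
Proof.
  intros Hstep j k Hadj. rewrite !breakpoint_len. apply piece_len_ratio; [exact Hstep|].
  destruct Hadj as [Hjk|Hkj].
  - apply (adjacent_succ _ _ breakpoint_lt breakpoint_ordered) in Hjk. subst k. lia.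
  - apply (adjacent_succ _ _ breakpoint_lt breakpoint_ordered) in Hkj. subst j. lia.
Qed.

End Construction.

Section Refinement.

Variables (l r : Z -> R) (C M : R) (m : R -> R).
Hypothesis l_lt_r : forall j, l j < r j.
Hypothesis lr_ordered : Z_ordered l r.
Hypothesis lr_bounded : bounded_geometry l r C.
Hypothesis l0 : l 0%Z = -1.
Hypothesis r0 : r 0%Z = 1.
Hypothesis M_gt1 : 1 < M.
Hypothesis m_window_min : forall x, 1 <= x -> window_min l r x (m x).

Let C_ge1 : 1 <= C := bounded_geometry_ge1 _ _ l_lt_r lr_ordered C lr_bounded.

Lemma window_min_pos x : 1 <= x -> 0 < m x.
Proof.
  intros Hx. destruct (m_window_min x Hx) as [[k [_ <-]] _]. pose proof (l_lt_r k). lra.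
Qed.

Lemma window_min_antitone x y : 1 <= x <= y -> m y <= m x.
Proof.
  intros Hxy. destruct (m_window_min x ltac:(lra)) as [[k [[Hk1 Hk2] <-]] _].
  apply (proj2 (m_window_min y ltac:(lra))). split; lra.
Qed.

Lemma window_min_grow x d : 1 <= x -> 0 <= d -> C * d < m x -> m x <= C * m (x + d).
Proof.
  intros Hx Hd Hdm. destruct (m_window_min (x + d) ltac:(lra)) as [[k [[Hk1 Hk2] <-]] _].
  exact (window_min_near _ _ l_lt_r lr_ordered C x d (m x) lr_bounded
           (m_window_min x Hx) Hdm k Hk1 Hk2).
Qed.

Lemma window_min_one : m 1 = 2.
Proof.
  destruct (m_window_min 1 ltac:(lra)) as [[k [[Hk1 Hk2] <-]] _].
  destruct (Z_lt_le_dec 0 k) as [Hpos|Hle].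
  { pose proof (l_nondecreasing _ _ l_lt_r lr_ordered 1 k ltac:(lia)).
    pose proof (lr_ordered 0%Z). simpl in *. lra. }
  destruct (Z_lt_le_dec k 0) as [Hneg|Hge]; [|replace k with 0%Z by lia; lra].
  pose proof (r_le_l _ _ l_lt_r lr_ordered k 0 Hneg). lra.
Qed.

Definition refine_len (p : R) : R := powerRZ 2 (log2_floor (m p / (2 * M * C))).

Lemma refine_len_pos p : 0 < refine_len p.
Proof. apply powerRZ_lt. lra. Qed.

Lemma refine_len_spec p : 1 <= p ->
  refine_len p * (2 * M * C) <= m p < 2 * refine_len p * (2 * M * C).
Proof.
  intros Hp. pose proof (window_min_pos p Hp).
  assert (HD : 0 < 2 * M * C) by nra.
  destruct (pow2_log2_floor (m p / (2 * M * C))) as [Hlo Hhi];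
    [apply Rdiv_lt_0_compat; lra|].
  fold (refine_len p) in Hlo, Hhi.
  split.
  - apply (Rmult_le_compat_r (2 * M * C)) in Hlo; [|lra].
    replace (m p / (2 * M * C) * (2 * M * C)) with (m p) in Hlo by (field; lra). exact Hlo.
  - apply (Rmult_lt_compat_r (2 * M * C)) in Hhi; [|lra].
    replace (m p / (2 * M * C) * (2 * M * C)) with (m p) in Hhi by (field; lra). exact Hhi.
Qed.

Notation A := (piece_len refine_len).
Notation P := (piece_end refine_len).

Lemma refine_piece_succ n : A (S n) * (2 * M * C) <= m (P n).
Proof.
  rewrite piece_len_S.
  pose proof (Rmin_r (A n) (refine_len (P n))).
  pose proof (refine_len_spec (P n) (piece_end_ge1 _ refine_len_pos n)).
  assert (0 < 2 * M * C) by nra. nra.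
Qed.

Lemma refine_piece_gap n : C * A (S n) < m (P n).
Proof.
  pose proof (refine_piece_succ n). pose proof (piece_len_pos _ refine_len_pos (S n)).
  assert (0 < C * A (S n) * (2 * M - 1)) by (repeat apply Rmult_lt_0_compat; lra).
  nra.
Qed.

Lemma refine_piece_le n : A n <= C * m (P n).
Proof.
  destruct n as [|n].
  - rewrite piece_len_0, piece_end_0, window_min_one. lra.
  - pose proof (refine_piece_succ n). pose proof (piece_len_pos _ refine_len_pos (S n)).
    pose proof (window_min_grow (P n) (A (S n)) (piece_end_ge1 _ refine_len_pos n)
                  ltac:(lra) (refine_piece_gap n)).
    assert (A (S n) <= A (S n) * (2 * M * C)).
    { rewrite <- (Rmult_1_r (A (S n))) at 1. apply Rmult_le_compat_l; nra. }
    rewrite piece_end_S. lra.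
Qed.

Lemma refine_step n : A n <= 4 * M * C * C * A (S n).
Proof.
  rewrite (piece_len_S refine_len n). apply Rmin_case.
  - pose proof (piece_len_pos _ refine_len_pos n).
    assert (1 <= 4 * M * C * C) by (assert (1 <= C * C) by nra; nra).
    nra.
  - pose proof (refine_piece_le n).
    destruct (refine_len_spec (P n) (piece_end_ge1 _ refine_len_pos n)) as [_ Hhi].
    apply (Rmult_lt_compat_l C) in Hhi; [|lra].
    lra.
Qed.

Lemma refine_unbounded B : exists n, B < P n.
Proof.
  apply (piece_end_unbounded _ refine_len_pos). clear B. intros B.
  set (B' := Rmax 1 B).
  assert (HB' : 1 <= B') by apply Rmax_l.
  pose proof (window_min_pos B' HB').
  exists (m B' / (4 * M * C)). split; [apply Rdiv_lt_0_compat; nra|].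
  intros p Hp.
  pose proof (window_min_antitone p B' ltac:(pose proof (Rmax_r 1 B); unfold B'; lra)).
  pose proof (refine_len_spec p ltac:(lra)).
  apply (Rmult_le_reg_r (4 * M * C)); [nra|].
  replace (m B' / (4 * M * C) * (4 * M * C)) with (m B') by (field; lra).
  nra.
Qed.

Lemma refine_fine j k : j <> 0%Z ->
  (exists x, breakpoint refine_len j < x < breakpoint refine_len (j + 1) /\ l k < x < r k) ->
  A (Z.abs_nat j) < (r k - l k) / M.
Proof.
  intros Hj [x [Hxj Hxk]].
  destruct (Z.abs_nat j) as [|n] eqn:Hn; [lia|].
  pose proof (breakpoint_within _ refine_len_pos j) as Hwithin.
  rewrite Hn, piece_end_S in Hwithin.
  pose proof (window_min_near _ _ l_lt_r lr_ordered C (P n) (A (S n)) (m (P n)) lr_bounded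
                (m_window_min _ (piece_end_ge1 _ refine_len_pos n)) (refine_piece_gap n) k
                ltac:(lra) ltac:(lra)).
  pose proof (refine_piece_succ n). pose proof (l_lt_r k).
  apply (Rmult_lt_reg_r M); [lra|].
  replace ((r k - l k) / M * M) with (r k - l k) by (field; lra).
  pose proof (piece_len_pos _ refine_len_pos (S n)). nra.
Qed.

End Refinement.

Lemma window_min_choice (l r : Z -> R) : is_partition l r -> Z_ordered l r ->
  l 0%Z = -1 -> r 0%Z = 1 -> exists m : R -> R, forall x, 0 < x -> window_min l r x (m x).
Proof.
  intros [Hlr [_ [_ Hcover]]] Hz Hl0 Hr0.
  apply (choice (fun x v => 0 < x -> window_min l r x v)). intros x.
  destruct (Rlt_dec 0 x) as [Hx|Hx].
  - destruct (window_min_exists l r Hlr Hz x Hcover) as [v Hv].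
    + exists 0%Z. split; lra.
    + exists v. auto.
  - exists 0. lra.
Qed.

Theorem mainTheorem17 :
  forall (C M : R), 1 < M ->
  exists K : R,
  forall (l r : Z -> R),
    is_partition l r -> Z_ordered l r -> bounded_geometry l r C ->
    l 0%Z = -1 -> r 0%Z = 1 ->
    exists (l' r' : Z -> R),
      is_partition l' r' /\ Z_ordered l' r' /\
      (l' 0%Z = l 0%Z /\ r' 0%Z = r 0%Z) /\
      (forall j, l' (- j)%Z = - r' j /\ r' (- j)%Z = - l' j) /\
      (forall j k, (Z.abs j <= Z.abs k)%Z -> r' k - l' k <= r' j - l' j) /\
      (forall j, exists n : Z, r' j - l' j = powerRZ 2 n) /\
      (forall j k, ~ (l' j = l 0%Z /\ r' j = r 0%Z) ->
         (exists x, l' j < x < r' j /\ l k < x < r k) ->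
         r' j - l' j < (r k - l k) / M) /\
      bounded_geometry l' r' K.
Proof.
  intros C M HM. exists (4 * M * C * C).
  intros l r Hpart Hz HB Hl0 Hr0. pose proof (proj1 Hpart) as Hlr.
  destruct (window_min_choice l r Hpart Hz Hl0 Hr0) as [m Hm0].
  assert (Hm : forall x, 1 <= x -> window_min l r x (m x)) by (intros; apply Hm0; lra).
  set (g := refine_len C M m). assert (Hg : forall p, 0 < g p) by apply refine_len_pos.
  exists (breakpoint g), (fun j => breakpoint g (j + 1)).
  split; [apply breakpoint_partition; auto; apply (refine_unbounded l r); auto|].
  split; [apply breakpoint_ordered|].
  split; [rewrite Hl0, Hr0; split; reflexivity|].
  split.
  { intros j. split; [apply breakpoint_sym|].
    replace (- j + 1)%Z with (- (j - 1))%Z by lia. rewrite breakpoint_sym, Z.sub_add.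
    reflexivity. }
  split.
  { intros j k Hjk. rewrite !breakpoint_len. apply piece_len_antitone. lia. }
  split.
  { intros j. rewrite breakpoint_len. apply piece_len_pow2. intros p. eexists. reflexivity. }
  split.
  { intros j k Hne Hx. rewrite breakpoint_len. apply (refine_fine l r); auto.
    intros ->. apply Hne. rewrite Hl0, Hr0. split; reflexivity. }
  apply breakpoint_bounded_geometry; [exact Hg|]. apply (refine_step l r); auto.
Qed.
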